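(* Let $G$ be a subgroup of $\mathrm{V}(r,\mathbb R^*_+,\mathbb R)$ with $G\cap\mathrm{F}(r,\mathbb R^*_+,\mathbb R)=\mathrm{F}(r,\Lambda,A)=\mathrm{F}$. Let $a\in\mathrm{F}^\uparrow$ with $\mathrm{supp}(a)=(0,r)$, $\alpha_0\in(0,r)\cap A$, $\alpha_k=(\alpha_0)a^k$, and $b\in\mathrm{F}^\uparrow$ with $\mathrm{supp}(b)=(\alpha_0,\alpha_1)$. Then $C_G(a)=C_{\mathrm F}(a)$ and $C_G(\{a^{-k}ba^k\mid k\in\mathbb Z\})=C_{\mathrm F}(\{a^{-k}ba^k\mid k\in\mathbb Z\})$.
   Context: Admissible triple $(r,\Lambda,A)$: $r>0$, $\Lambda\le\mathbb R^*_+$ nontrivial, $A\subseteq\mathbb R$ additive subgroup with $r\in A$, $\Lambda A\subseteq A$. $\mathrm{V}(r,\Lambda,A)$ is the group of bijections of $[0,r)$ that are piecewise affine with finitely many cuts and singular points, right-continuous everywhere, slopes in $\Lambda$, cut/singular points and their images in $A$; $\mathrm{F}(r,\Lambda,A)$ is its subgroup of elements continuous in the usual topology. Maps act on the right. $\mathrm{F}^\uparrow=\{x\in\mathrm{F}\mid(t)x\ge t\ \forall t\}$; $\mathrm{supp}$ is the set of non-fixed points; $C_G(\cdot)$ denotes centralizer in $G$. *)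

From Stdlib Require Import Reals Lra ZArith.
Open Scope R_scope.

(* Elements of V(r,Lambda,A) are represented as functions R -> R that are the
   identity outside [0,r).  Maps act on the right: (t)(fg) = g (f t). *)

Definition in_I (r t : R) : Prop := 0 <= t < r.

Definition mult_subgroup (Lam : R -> Prop) : Prop :=
  (forall x, Lam x -> 0 < x) /\ Lam 1 /\
  (forall x y, Lam x -> Lam y -> Lam (x * y)) /\
  (forall x, Lam x -> Lam (/ x)).

Definition nontrivial (Lam : R -> Prop) : Prop := exists x, Lam x /\ x <> 1.

Definition add_subgroup (A : R -> Prop) : Prop :=
  A 0 /\ (forall x y, A x -> A y -> A (x + y)) /\ (forall x, A x -> A (- x)).

Definition admissible (r : R) (Lam A : R -> Prop) : Prop :=
  0 < r /\ mult_subgroup Lam /\ nontrivial Lam /\ add_subgroup A /\ A r /\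
  (forall l x, Lam l -> A x -> A (l * x)).

Definition bij_I (r : R) (f : R -> R) : Prop :=
  (forall t, ~ in_I r t -> f t = t) /\
  (forall t, in_I r t -> in_I r (f t)) /\
  (forall y, in_I r y -> exists t, in_I r t /\ f t = y) /\
  (forall s t, in_I r s -> in_I r t -> f s = f t -> s = t).

(* finitely many cut/singular points x_0 = 0 < x_1 < ... < x_n = r, all in A,
   with images in A; affine with slope in Lam on each [x_i, x_{i+1})
   (hence right-continuous everywhere). *)
Definition pw_affine (r : R) (Lam A : R -> Prop) (f : R -> R) : Prop :=
  exists (n : nat) (x lam c : nat -> R),
    x 0%nat = 0 /\ x n = r /\
    (forall i, (i < n)%nat -> x i < x (S i)) /\
    (forall i, (i <= n)%nat -> A (x i)) /\
    (forall i, (i < n)%nat -> A (f (x i))) /\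
    (forall i, (i < n)%nat -> Lam (lam i)) /\
    (forall i t, (i < n)%nat -> x i <= t < x (S i) -> f t = lam i * t + c i).

Definition inV (r : R) (Lam A : R -> Prop) (f : R -> R) : Prop :=
  bij_I r f /\ pw_affine r Lam A f.

Definition cont_I (r : R) (f : R -> R) : Prop :=
  forall t, in_I r t -> forall eps, 0 < eps -> exists delta, 0 < delta /\
    forall s, in_I r s -> Rabs (s - t) < delta -> Rabs (f s - f t) < eps.

Definition inF (r : R) (Lam A : R -> Prop) (f : R -> R) : Prop :=
  inV r Lam A f /\ cont_I r f.

Definition posR : R -> Prop := fun x => 0 < x.
Definition allR : R -> Prop := fun _ => True.

Definition subgroupV (r : R) (G : (R -> R) -> Prop) : Prop :=
  (forall g, G g -> inV r posR allR g) /\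
  G (fun t => t) /\
  (forall g h, G g -> G h -> G (fun t => h (g t))) /\
  (forall g, G g -> exists h, G h /\ (forall t, h (g t) = t) /\ (forall t, g (h t) = t)).

Definition Fup (r : R) (Lam A : R -> Prop) (f : R -> R) : Prop :=
  inF r Lam A f /\ (forall t, in_I r t -> t <= f t).

Definition supp_eq (f : R -> R) (P : R -> Prop) : Prop :=
  forall t, f t <> t <-> P t.

Definition commute (f g : R -> R) : Prop := forall t, f (g t) = g (f t).

(* h = a^{-k} b a^k for some k in Z (right action); with inverses cleared:
   k = m >= 0 :  a^m h = b a^m,  i.e.  h (a^m t) = a^m (b t);
   k = -m <= 0:  h a^m = a^m b,  i.e.  a^m (h t) = b (a^m t). *)
Definition conj_set (a b : R -> R) (h : R -> R) : Prop :=
  exists m : nat,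
    (forall t, h (Nat.iter m a t) = Nat.iter m a (b t)) \/
    (forall t, Nat.iter m a (h t) = b (Nat.iter m a t)).

From Stdlib Require Import Reals Lra Lia ZArith Classical.
Open Scope R_scope.

(* Every g in G is a piecewise affine bijection of [0,r) with positive slopes
   and finitely many cuts; it is right-continuous, so it lies in F as soon as
   it is left-continuous at every point of (0,r) ([centralizer_in_F]).

   The key notion is a bump: an increasing map c of [0,r) with c(t) >= t
   whose support is an interval (lo,hi).  If g commutes with c, then g is
   left-continuous on (lo,hi) ([bump_centralizer_left_cont]): otherwise the
   largest cut point q of g in (lo,hi) where g fails to be left-continuous
   would yield another such point c(q) > q.  Such a g also maps (lo,hi)
   increasingly onto itself, so if g commutes with two bumps with adjacent
   supports (lo,beta) and (beta,hi), it fixes beta and is left-continuous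
   there ([adjacent_bumps_left_cont]).

   The first claim applies this to the bump a, with support (0,r).  For the
   second, the conjugates t |-> a^k (b (a^-k t)), k in Z, are bumps with
   supports (alpha_k, alpha_(k+1)); since a has no fixed point in (0,r) its
   orbits are unbounded in both directions, so every point of (0,r) lies in
   one support or is the common endpoint of two adjacent ones. *)

Ltac solve_abs :=
  unfold Rabs in *;
  repeat match goal with
         | |- context [Rcase_abs ?x] => destruct (Rcase_abs x)
         | H : context [Rcase_abs ?x] |- _ => destruct (Rcase_abs x)
         end;
  lra.

Definition left_cont (f : R -> R) (p : R) : Prop :=
  forall eps, 0 < eps -> exists d, 0 < d /\
    forall s, p - d < s < p -> Rabs (f s - f p) < eps.

Definition right_cont (f : R -> R) (p : R) : Prop :=
  forall eps, 0 < eps -> exists d, 0 < d /\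
    forall s, p <= s < p + d -> Rabs (f s - f p) < eps.

Lemma affine_cont (l m p eps : R) : 0 < eps ->
  exists d, 0 < d /\ forall s, Rabs (s - p) < d -> Rabs ((l * s + m) - (l * p + m)) < eps.
Proof.
  intros Heps.
  assert (Hl : 0 <= Rabs l) by apply Rabs_pos.
  set (d := eps / (Rabs l + 1)).
  assert (Hd : 0 < d) by (apply Rdiv_lt_0_compat; lra).
  assert (Hld : Rabs l * d = eps - d) by (unfold d; field; lra).
  exists d; split; [exact Hd|]. intros s Hs.
  replace (l * s + m - (l * p + m)) with (l * (s - p)) by ring.
  rewrite Rabs_mult.
  assert (Rabs l * Rabs (s - p) <= Rabs l * d)
    by (apply Rmult_le_compat_l; lra).
  lra.
Qed.

Lemma cont_of_one_sided (r : R) (f : R -> R) :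
  (forall q, 0 <= q < r -> right_cont f q) ->
  (forall q, 0 < q < r -> left_cont f q) -> cont_I r f.
Proof.
  intros HR HL t Ht e He. unfold in_I in Ht.
  destruct (HR t Ht e He) as (d1 & Hd1 & H1).
  destruct (Req_dec t 0) as [E|E].
  - exists d1; split; [exact Hd1|]. intros s Hs Hst. unfold in_I in Hs.
    apply H1. solve_abs.
  - destruct (HL t ltac:(lra) e He) as (d2 & Hd2 & H2).
    exists (Rmin d1 d2); split; [apply Rmin_pos; lra|].
    pose proof (Rmin_l d1 d2). pose proof (Rmin_r d1 d2).
    intros s Hs Hst. destruct (Rle_dec t s).
    + apply H1. solve_abs.
    + apply H2. solve_abs.
Qed.

Lemma left_cont_of_cont (r : R) (f : R -> R) (p : R) :
  cont_I r f -> 0 < p < r -> left_cont f p.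
Proof.
  intros Hc Hp e He. destruct (Hc p ltac:(unfold in_I; lra) e He) as (d & Hd & H).
  exists (Rmin d p); split; [apply Rmin_pos; lra|].
  pose proof (Rmin_l d p). pose proof (Rmin_r d p).
  intros s Hs. apply H; [unfold in_I; lra | solve_abs].
Qed.

Lemma left_cont_affine_extends (f : R -> R) (t xi l m : R) :
  left_cont f t -> xi < t -> (forall s, xi <= s < t -> f s = l * s + m) ->
  f t = l * t + m.
Proof.
  intros HL Hxt Hf.
  destruct (Req_dec (f t) (l * t + m)) as [E|E]; [exact E|exfalso].
  set (e := Rabs (f t - (l * t + m))).
  assert (He : 0 < e) by (apply Rabs_pos_lt; lra).
  destruct (HL (e / 2) ltac:(lra)) as (d1 & Hd1 & H1).
  destruct (affine_cont l m t (e / 2) ltac:(lra)) as (d2 & Hd2 & H2).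
  set (rho := Rmin d1 (Rmin d2 (t - xi)) / 2).
  assert (Hr : 0 < rho /\ rho < d1 /\ rho < d2 /\ rho < t - xi).
  { unfold rho. pose proof (Rmin_l d1 (Rmin d2 (t - xi))).
    pose proof (Rmin_r d1 (Rmin d2 (t - xi))).
    pose proof (Rmin_l d2 (t - xi)). pose proof (Rmin_r d2 (t - xi)).
    assert (0 < Rmin d1 (Rmin d2 (t - xi))) by (repeat apply Rmin_pos; lra).
    lra. }
  specialize (H1 (t - rho) ltac:(lra)).
  specialize (H2 (t - rho) ltac:(solve_abs)).
  rewrite (Hf (t - rho) ltac:(lra)) in H1.
  unfold e in *. solve_abs.
Qed.

Lemma largest_index (P : nat -> Prop) (n j : nat) : P j -> (j < n)%nat ->
  exists m, P m /\ (m < n)%nat /\ forall k, P k -> (k < n)%nat -> (k <= m)%nat.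
Proof.
  revert j. induction n as [|n IH]; intros j Hj Hjn; [lia|].
  destruct (classic (P n)) as [Hn|Hn].
  - exists n; repeat split; auto. intros; lia.
  - assert (j <> n) by (intros ->; tauto).
    destruct (IH j Hj ltac:(lia)) as (m & Hm & Hmn & Hmax).
    exists m; repeat split; auto. intros k Hk Hkn.
    assert (k <> n) by (intros ->; tauto). apply Hmax; auto; lia.
Qed.

Lemma sequence_crossing (s : nat -> R) (q : R) (K : nat) :
  s 0%nat <= q -> q < s K -> exists m, s m <= q < s (S m).
Proof.
  induction K as [|K IH]; intros H0 HK; [lra|].
  destruct (Rlt_le_dec q (s K)); [apply IH; auto | exists K; split; auto].
Qed.

Definition affine_partition (r : R) (f : R -> R) (n : nat) (x lam c : nat -> R) : Prop :=
  x 0%nat = 0 /\ x n = r /\ (forall i, (i < n)%nat -> x i < x (S i)) /\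
  (forall i, (i < n)%nat -> 0 < lam i) /\
  (forall i t, (i < n)%nat -> x i <= t < x (S i) -> f t = lam i * t + c i).

Lemma affine_partition_of_pw (r : R) (f : R -> R) :
  pw_affine r posR allR f -> exists n x lam c, affine_partition r f n x lam c.
Proof.
  intros (n & x & lam & c & H0 & Hn & Hx & _ & _ & Hl & Hf).
  exists n, x, lam, c; repeat split; auto.
Qed.

Section AffinePartition.

Variables (r : R) (f : R -> R) (n : nat) (x lam c : nat -> R).
Hypothesis Hpart : affine_partition r f n x lam c.

Lemma partition_piece (q : R) : 0 <= q < r ->
  exists i, (i < n)%nat /\ x i <= q < x (S i).
Proof.
  destruct Hpart as (H0 & Hn & Hx & _ & _). intros Hq.
  assert (H : forall k, (k <= n)%nat -> q < x k ->
            exists i, (i < k)%nat /\ x i <= q < x (S i)).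
  { induction k as [|k IH]; intros Hk Hqk; [lra|].
    destruct (Rlt_le_dec q (x k)) as [Hlt|Hle].
    - destruct (IH ltac:(lia) Hlt) as (i & Hi & Hiq). exists i; split; [lia|exact Hiq].
    - exists k; split; [lia|lra]. }
  destruct (H n ltac:(lia) ltac:(lra)) as (i & Hi & Hiq). eauto.
Qed.

Lemma partition_mono (i j : nat) : (i <= j)%nat -> (j <= n)%nat -> x i <= x j.
Proof.
  destruct Hpart as (_ & _ & Hx & _ & _). intros Hij.
  induction Hij as [|j Hij IH]; intros Hj; [lra|].
  specialize (IH ltac:(lia)). specialize (Hx j ltac:(lia)). lra.
Qed.

(* Each piece is closed on the left, so [f] is right-continuous. *)
Lemma partition_right_cont (q : R) : 0 <= q < r -> right_cont f q.
Proof.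
  intros Hq e He. destruct (partition_piece q Hq) as (i & Hi & Hiq).
  destruct Hpart as (_ & _ & _ & _ & Hf).
  destruct (affine_cont (lam i) (c i) q e He) as (d & Hd & Haff).
  exists (Rmin d (x (S i) - q)); split; [apply Rmin_pos; lra|].
  pose proof (Rmin_l d (x (S i) - q)). pose proof (Rmin_r d (x (S i) - q)).
  intros s Hs. rewrite (Hf i s Hi ltac:(lra)), (Hf i q Hi ltac:(lra)).
  apply Haff. solve_abs.
Qed.

Lemma discontinuity_is_cut (q : R) : 0 < q < r -> ~ left_cont f q ->
  exists j, (j < n)%nat /\ q = x j.
Proof.
  intros Hq HnL. destruct (partition_piece q ltac:(lra)) as (i & Hi & Hiq).
  destruct (Req_dec (x i) q) as [E|E]; [exists i; split; auto|].
  exfalso; apply HnL. destruct Hpart as (_ & _ & _ & _ & Hf).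
  intros e He. destruct (affine_cont (lam i) (c i) q e He) as (d & Hd & Haff).
  exists (Rmin d (q - x i)); split; [apply Rmin_pos; lra|].
  pose proof (Rmin_l d (q - x i)). pose proof (Rmin_r d (q - x i)).
  intros s Hs. rewrite (Hf i s Hi ltac:(lra)), (Hf i q Hi ltac:(lra)).
  apply Haff. solve_abs.
Qed.

Lemma partition_increasing (u v : R) : 0 <= u -> v <= r ->
  (forall t, u < t < v -> left_cont f t) ->
  forall s t, u <= s -> s < t -> t < v -> f s < f t.
Proof.
  intros Hu Hv HLC.
  pose proof Hpart as (_ & Hn & _ & Hl & Hf).
  assert (K : forall i, (i <= n)%nat ->
            forall s t, u <= s -> s < t -> t < v -> t <= x i -> f s < f t).
  { induction i as [|i IH]; intros Hi s t Hs Hst Htv Hti.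
    - pose proof Hpart as (H0 & _). lra.
    - assert (Hin : (i < n)%nat) by lia.
      assert (Hpiece : forall s', u <= s' -> x i <= s' -> s' < t -> f s' < f t).
      { intros s' Hs1 Hs2 Hs3. pose proof (Hl i Hin) as Hli.
        assert (Ht : f t = lam i * t + c i).
        { destruct (Rlt_le_dec t (x (S i))).
          - apply Hf; auto; lra.
          - apply (left_cont_affine_extends f t (x i)); [apply HLC; lra | lra |].
            intros s0 Hs0. apply Hf; auto; lra. }
        rewrite Ht, (Hf i s' Hin ltac:(lra)).
        apply Rplus_lt_compat_r, Rmult_lt_compat_l; lra. }
      destruct (Rle_dec t (x i)); [apply IH; auto; lia|].
      destruct (Rle_dec (x i) s); [apply Hpiece; lra|].
      apply Rlt_trans with (f (x i)); [apply IH; try lia; lra | apply Hpiece; lra]. }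
  intros s t Hs Hst Htv. apply (K n); auto; lra.
Qed.

End AffinePartition.

Definition left_approach (f : R -> R) (p : R) : Prop :=
  forall eps, 0 < eps -> exists d, 0 < d /\
    forall s, p - d < s < p -> f p - eps < f s < f p.

(* Strictly increasing self-maps of [0,r) preserving (0,r) and
   left-continuous on (0,r); this class contains F^up and is closed under
   composition and inversion. *)
Record incr_map (r : R) (f : R -> R) : Prop := IncrMap {
  incr_into : forall t, in_I r t -> in_I r (f t);
  incr_pos : forall t, 0 < t < r -> 0 < f t < r;
  incr_strict : forall s t, in_I r s -> in_I r t -> s < t -> f s < f t;
  incr_left : forall p, 0 < p < r -> left_approach f p }.

Arguments incr_into {r f}.
Arguments incr_pos {r f}.
Arguments incr_strict {r f}.
Arguments incr_left {r f}.

Section IncrMap.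

Variable r : R.

Lemma incr_le (f : R -> R) (s t : R) : incr_map r f ->
  in_I r s -> in_I r t -> s <= t -> f s <= f t.
Proof.
  intros Hf Hs Ht Hst. destruct (Req_dec s t) as [->|]; [lra|].
  left; apply (incr_strict Hf); auto; lra.
Qed.

Lemma incr_reflect (f : R -> R) (s t : R) : incr_map r f ->
  in_I r s -> in_I r t -> f s < f t -> s < t.
Proof.
  intros Hf Hs Ht H. destruct (Rlt_le_dec s t) as [|Hle]; [assumption|].
  pose proof (incr_le f t s Hf Ht Hs Hle). lra.
Qed.

Lemma incr_inj (f : R -> R) (s t : R) : incr_map r f ->
  in_I r s -> in_I r t -> f s = f t -> s = t.
Proof.
  intros Hf Hs Ht E.
  destruct (Rtotal_order s t) as [H|[H|H]]; [|exact H|];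
    apply (incr_strict Hf) in H; auto; lra.
Qed.

Lemma incr_comp (f g : R -> R) : incr_map r f -> incr_map r g ->
  incr_map r (fun t => g (f t)).
Proof.
  intros Hf Hg. split.
  - intros t Ht. apply (incr_into Hg), (incr_into Hf), Ht.
  - intros t Ht. apply (incr_pos Hg), (incr_pos Hf), Ht.
  - intros s t Hs Ht Hst.
    apply (incr_strict Hg); try apply (incr_into Hf); auto.
    apply (incr_strict Hf); auto.
  - intros p Hp e He.
    destruct (incr_left Hg (f p) (incr_pos Hf p Hp) e He) as (d & Hd & Hgd).
    destruct (incr_left Hf p Hp d Hd) as (d' & Hd' & Hfd').
    exists d'; split; [exact Hd'|]. intros s Hs. apply Hgd, Hfd', Hs.
Qed.

Lemma incr_iter (f : R -> R) (m : nat) : incr_map r f -> incr_map r (Nat.iter m f).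
Proof.
  intros Hf. induction m as [|m IH].
  - split; auto; try (intros; lra).
    intros p Hp e He. exists e; split; [exact He|]. intros; simpl; lra.
  - exact (incr_comp (Nat.iter m f) f IH Hf).
Qed.

Lemma incr_of_Fup (Lam A : R -> Prop) (f : R -> R) :
  (forall l, Lam l -> 0 < l) -> Fup r Lam A f -> incr_map r f.
Proof.
  intros HLam ((((_ & Hinto & _ & _) & Hpw) & Hc) & Hup).
  destruct Hpw as (n & x & lam & c & H0 & Hn & Hx & _ & _ & Hl & Hf).
  assert (Hpart : affine_partition r f n x lam c) by (repeat split; auto).
  assert (Hlc : forall p, 0 < p < r -> left_cont f p)
    by (intros p Hp; apply (left_cont_of_cont r); auto).
  assert (Hm : forall s t, in_I r s -> in_I r t -> s < t -> f s < f t).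
  { intros s t Hs Ht Hst. unfold in_I in *.
    apply (partition_increasing r f n x lam c Hpart 0 r); auto; lra. }
  split; [exact Hinto | | exact Hm |].
  - intros t Ht. assert (in_I r t) by (unfold in_I; lra).
    specialize (Hup t H). specialize (Hinto t H). unfold in_I in *. lra.
  - intros p Hp e He. destruct (Hlc p Hp e He) as (d & Hd & H).
    exists (Rmin d p); split; [apply Rmin_pos; lra|].
    pose proof (Rmin_l d p). pose proof (Rmin_r d p).
    intros s Hs. specialize (H s ltac:(lra)).
    assert (f s < f p) by (apply Hm; unfold in_I; lra).
    solve_abs.
Qed.

Lemma incr_inverse (f h : R -> R) : incr_map r f -> f 0 = 0 ->
  (forall y, in_I r y -> exists t, in_I r t /\ f t = y) ->
  (forall t, h (f t) = t) -> (forall t, f (h t) = t) -> incr_map r h.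
Proof.
  intros Hf H0 Hsurj Hhf Hfh.
  assert (Hinto : forall y, in_I r y -> in_I r (h y)).
  { intros y Hy. destruct (Hsurj y Hy) as (t & Ht & <-). rewrite Hhf; exact Ht. }
  assert (Hm : forall s t, in_I r s -> in_I r t -> s < t -> h s < h t).
  { intros s t Hs Ht Hst. apply (incr_reflect f); auto. rewrite !Hfh; exact Hst. }
  split; [exact Hinto | | exact Hm |].
  - intros y Hy. assert (Hhy : in_I r (h y)) by (apply Hinto; unfold in_I; lra).
    destruct (Req_dec (h y) 0) as [E|E]; [|unfold in_I in Hhy; lra].
    rewrite <- (Hfh y), E, H0 in Hy. lra.
  - intros p Hp e He.
    assert (Hx : in_I r (h p)) by (apply Hinto; unfold in_I; lra).
    assert (Hxp : 0 < h p).
    { destruct (Req_dec (h p) 0) as [E|E]; [|unfold in_I in Hx; lra].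
      rewrite <- (Hfh p), E, H0 in Hp. lra. }
    (* a point [w] slightly below [h p]; its image bounds the window *)
    set (w := Rmax (h p - e / 2) (h p / 2)).
    assert (Hw : h p - e / 2 <= w /\ h p / 2 <= w /\ w < h p).
    { unfold w. split; [apply Rmax_l | split; [apply Rmax_r|]].
      apply Rmax_lub_lt; lra. }
    assert (HwI : in_I r w) by (unfold in_I in *; lra).
    assert (Hfw : f w < p) by (rewrite <- (Hfh p); apply (incr_strict Hf); auto; lra).
    assert (HfwI : in_I r (f w)) by (apply (incr_into Hf), HwI).
    exists (p - f w); split; [lra|].
    intros s Hs. unfold in_I in HfwI.
    assert (HsI : in_I r s) by (unfold in_I; lra).
    split.
    + assert (w < h s) by (apply (incr_reflect f); auto; rewrite Hfh; lra). lra.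
    + apply Hm; [exact HsI | unfold in_I; lra | lra].
Qed.

Lemma incr_inverse_cont (f : R -> R) (y e : R) : incr_map r f -> in_I r y -> 0 < e ->
  exists eta, 0 < eta /\
    forall z, in_I r z -> Rabs (f z - f y) < eta -> Rabs (z - y) < e.
Proof.
  intros Hf Hy He. unfold in_I in Hy.
  assert (E1 : exists e1, 0 < e1 /\ (y + e < r -> e1 <= f (y + e) - f y)).
  { destruct (Rlt_dec (y + e) r).
    - exists (f (y + e) - f y). split; [|lra].
      assert (f y < f (y + e)) by (apply (incr_strict Hf); unfold in_I; lra). lra.
    - exists 1; split; lra. }
  assert (E2 : exists e2, 0 < e2 /\ (0 <= y - e -> e2 <= f y - f (y - e))).
  { destruct (Rle_dec 0 (y - e)).
    - exists (f y - f (y - e)). split; [|lra].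
      assert (f (y - e) < f y) by (apply (incr_strict Hf); unfold in_I; lra). lra.
    - exists 1; split; lra. }
  destruct E1 as (e1 & He1 & H1). destruct E2 as (e2 & He2 & H2).
  exists (Rmin e1 e2); split; [apply Rmin_pos; lra|].
  pose proof (Rmin_l e1 e2). pose proof (Rmin_r e1 e2).
  intros z Hz Hfz. unfold in_I in Hz.
  destruct (Rlt_le_dec (Rabs (z - y)) e) as [|Hge]; [assumption|exfalso].
  destruct (Rle_dec (y + e) z).
  - assert (f (y + e) <= f z) by (apply (incr_le f); unfold in_I; auto; lra).
    specialize (H1 ltac:(lra)). solve_abs.
  - assert (z <= y - e) by solve_abs.
    assert (f z <= f (y - e)) by (apply (incr_le f); unfold in_I; auto; lra).
    specialize (H2 ltac:(lra)). solve_abs.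
Qed.

End IncrMap.

(* A bump with support (lo,hi): an increasing map lying above the identity
   and moving exactly the points of (lo,hi).  Both [a] and [b] are bumps,
   and so are the conjugates of [b] by powers of [a]. *)
Record bump (r : R) (c : R -> R) (lo hi : R) : Prop := Bump {
  bump_incr : incr_map r c;
  bump_up : forall t, in_I r t -> t <= c t;
  bump_supp : forall t, in_I r t -> (c t <> t <-> lo < t < hi);
  bump_lo : 0 <= lo < hi;
  bump_hi : hi <= r }.

Arguments bump_incr {r c lo hi}.
Arguments bump_up {r c lo hi}.
Arguments bump_supp {r c lo hi}.
Arguments bump_lo {r c lo hi}.
Arguments bump_hi {r c lo hi}.

Lemma bump_of_Fup (r : R) (Lam A : R -> Prop) (f : R -> R) (lo hi : R) :
  (forall l, Lam l -> 0 < l) -> Fup r Lam A f ->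
  supp_eq f (fun t => lo < t < hi) -> 0 <= lo < hi -> hi <= r -> bump r f lo hi.
Proof.
  intros HLam Hf Hsupp Hlo Hhi.
  split; auto; [exact (incr_of_Fup r Lam A f HLam Hf) | apply Hf].
Qed.

Lemma bump_moves (r : R) (c : R -> R) (lo hi p : R) : bump r c lo hi ->
  lo < p < hi -> p < c p /\ lo < c p < hi.
Proof.
  intros Hc Hp. pose proof (bump_lo Hc). pose proof (bump_hi Hc).
  assert (HpI : in_I r p) by (unfold in_I; lra).
  assert (Hne : c p <> p) by (apply (bump_supp Hc); auto).
  assert (HcpI : in_I r (c p)) by (apply (incr_into (bump_incr Hc)), HpI).
  pose proof (bump_up Hc p HpI). split; [lra|].
  apply (bump_supp Hc); auto. intros E. apply Hne.
  apply (incr_inj r c); auto. exact (bump_incr Hc).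
Qed.

Section Centralizer.

Variables (r : R) (g : R -> R).
Hypothesis HgV : inV r posR allR g.

Lemma left_cont_transfer (c : R -> R) (p : R) : incr_map r c -> commute g c ->
  0 < p < r -> left_cont g (c p) -> left_cont g p.
Proof.
  intros Hc Hcom Hp HL e He.
  destruct HgV as ((_ & Hginto & _ & _) & _).
  assert (HgpI : in_I r (g p)) by (apply Hginto; unfold in_I; lra).
  destruct (incr_inverse_cont r c (g p) e Hc HgpI He) as (eta & Heta & Hinv).
  destruct (HL eta Heta) as (d1 & Hd1 & H1).
  destruct (incr_left Hc p Hp d1 Hd1) as (d2 & Hd2 & H2).
  exists (Rmin d2 p); split; [apply Rmin_pos; lra|].
  pose proof (Rmin_l d2 p). pose proof (Rmin_r d2 p).
  intros s Hs. apply Hinv; [apply Hginto; unfold in_I; lra|].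
  rewrite <- !Hcom. apply H1, H2. lra.
Qed.

Section OneBump.

Variables (c : R -> R) (lo hi : R).
Hypotheses (Hc : bump r c lo hi) (Hcom : commute g c).

(* Otherwise take the largest cut point of [g] in (lo,hi) where [g]
   is not left-continuous; its image under [c] is a larger such point. *)
Lemma bump_centralizer_left_cont (q : R) : lo < q < hi -> left_cont g q.
Proof.
  intros Hq. pose proof (bump_lo Hc). pose proof (bump_hi Hc).
  destruct HgV as (_ & Hpw).
  destruct (affine_partition_of_pw r g Hpw) as (n & x & lam & cc & Hpart).
  apply NNPP. intros HnL.
  destruct (discontinuity_is_cut r g n x lam cc Hpart q ltac:(lra) HnL) as (j & Hj & Eq).
  set (P := fun k => (k < n)%nat /\ lo < x k < hi /\ ~ left_cont g (x k)).
  destruct (largest_index P n j) as (m & (_ & Hxm & HnLm) & Hmn & Hmax);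
    [unfold P; rewrite <- Eq; auto | exact Hj |].
  destruct (bump_moves r c lo hi (x m) Hc Hxm) as (Hlt & Hin).
  assert (HnLc : ~ left_cont g (c (x m))).
  { intros HL. apply HnLm. apply (left_cont_transfer c); auto; [exact (bump_incr Hc)|lra]. }
  destruct (discontinuity_is_cut r g n x lam cc Hpart (c (x m)) ltac:(lra) HnLc)
    as (j' & Hj' & Eq').
  assert (Hjm : (j' <= m)%nat) by (apply Hmax; auto; unfold P; rewrite <- Eq'; auto).
  pose proof (partition_mono r g n x lam cc Hpart j' m Hjm ltac:(lia)). lra.
Qed.

Lemma bump_support_into (t : R) : lo < t < hi -> lo < g t < hi.
Proof.
  intros Ht. pose proof (bump_lo Hc). pose proof (bump_hi Hc).
  destruct HgV as ((_ & Hginto & _ & Hginj) & _).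
  assert (HtI : in_I r t) by (unfold in_I; lra).
  assert (Hne : c t <> t) by (apply (bump_supp Hc); auto).
  apply (bump_supp Hc); [apply Hginto, HtI|].
  rewrite <- Hcom. intros E. apply Hne, Hginj; auto.
  apply (incr_into (bump_incr Hc)), HtI.
Qed.

Lemma bump_support_onto (y : R) : lo < y < hi -> exists t, lo < t < hi /\ g t = y.
Proof.
  intros Hy. pose proof (bump_lo Hc). pose proof (bump_hi Hc).
  destruct HgV as ((_ & Hginto & Hgsurj & _) & _).
  assert (HyI : in_I r y) by (unfold in_I; lra).
  destruct (Hgsurj y HyI) as (t & HtI & <-). exists t; split; [|reflexivity].
  apply (bump_supp Hc); [exact HtI|]. intros E.
  assert (Hfix : c (g t) = g t) by (rewrite <- Hcom, E; reflexivity).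
  revert Hfix. apply (bump_supp Hc); auto.
Qed.

Lemma bump_centralizer_increasing (s t : R) : lo < s -> s < t -> t < hi -> g s < g t.
Proof.
  intros Hs Hst Ht. pose proof (bump_lo Hc). pose proof (bump_hi Hc).
  destruct HgV as (_ & Hpw).
  destruct (affine_partition_of_pw r g Hpw) as (n & x & lam & cc & Hpart).
  apply (partition_increasing r g n x lam cc Hpart lo hi); auto; try lra.
  exact bump_centralizer_left_cont.
Qed.

(* Being an increasing bijection of (lo,hi), [g] tends to [lo] at [lo]
   and to [hi] at [hi]. *)
Lemma centralizer_limit_lo (eps : R) : 0 < eps ->
  exists d, 0 < d /\ forall s, lo < s < lo + d -> Rabs (g s - lo) < eps.
Proof.
  intros He. pose proof (bump_lo Hc).
  set (y := Rmin (lo + eps / 2) ((lo + hi) / 2)).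
  assert (Hy : y <= lo + eps / 2 /\ lo < y < hi).
  { unfold y. pose proof (Rmin_l (lo + eps / 2) ((lo + hi) / 2)).
    pose proof (Rmin_r (lo + eps / 2) ((lo + hi) / 2)).
    split; [lra | split; [apply Rmin_glb_lt|]; lra]. }
  destruct (bump_support_onto y ltac:(lra)) as (t & Ht & Hgt).
  exists (t - lo); split; [lra|]. intros s Hs.
  pose proof (bump_centralizer_increasing s t ltac:(lra) ltac:(lra) ltac:(lra)).
  pose proof (bump_support_into s ltac:(lra)). solve_abs.
Qed.

Lemma centralizer_limit_hi (eps : R) : 0 < eps ->
  exists d, 0 < d /\ forall s, hi - d < s < hi -> Rabs (g s - hi) < eps.
Proof.
  intros He. pose proof (bump_lo Hc).
  set (y := Rmax (hi - eps / 2) ((lo + hi) / 2)).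
  assert (Hy : hi - eps / 2 <= y /\ lo < y < hi).
  { unfold y. pose proof (Rmax_l (hi - eps / 2) ((lo + hi) / 2)).
    pose proof (Rmax_r (hi - eps / 2) ((lo + hi) / 2)).
    split; [lra | split; [|apply Rmax_lub_lt]; lra]. }
  destruct (bump_support_onto y ltac:(lra)) as (t & Ht & Hgt).
  exists (hi - t); split; [lra|]. intros s Hs.
  pose proof (bump_centralizer_increasing t s ltac:(lra) ltac:(lra) ltac:(lra)).
  pose proof (bump_support_into s ltac:(lra)). solve_abs.
Qed.

End OneBump.

(* At the common endpoint [beta] of two adjacent supports, [g] is squeezed
   from both sides: right-continuity forces [g beta = beta], and then the
   limit from the left gives left-continuity. *)
Lemma adjacent_bumps_left_cont (c1 c2 : R -> R) (lo beta hi : R) :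
  bump r c1 lo beta -> bump r c2 beta hi -> commute g c1 -> commute g c2 ->
  left_cont g beta.
Proof.
  intros H1 H2 Hc1 Hc2.
  pose proof (bump_lo H1). pose proof (bump_lo H2). pose proof (bump_hi H2).
  destruct HgV as (_ & Hpw).
  destruct (affine_partition_of_pw r g Hpw) as (n & x & lam & cc & Hpart).
  assert (Hfix : g beta = beta).
  { destruct (Req_dec (g beta) beta) as [|E]; [assumption|exfalso].
    set (e := Rabs (g beta - beta) / 2).
    assert (He : 0 < e) by (apply Rdiv_lt_0_compat; [apply Rabs_pos_lt|]; lra).
    destruct (partition_right_cont r g n x lam cc Hpart beta ltac:(lra) e He)
      as (d1 & Hd1 & Hright).
    destruct (centralizer_limit_lo c2 beta hi H2 Hc2 e He) as (d2 & Hd2 & Hlim).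
    set (s := beta + Rmin d1 d2 / 2).
    assert (Hs : beta < s /\ s < beta + d1 /\ s < beta + d2).
    { pose proof (Rmin_l d1 d2). pose proof (Rmin_r d1 d2).
      pose proof (Rmin_pos d1 d2 Hd1 Hd2). unfold s; lra. }
    specialize (Hright s ltac:(lra)). specialize (Hlim s ltac:(lra)).
    unfold e in *. solve_abs. }
  intros e He. rewrite Hfix. exact (centralizer_limit_hi c1 lo beta H1 Hc1 e He).
Qed.

End Centralizer.

Lemma conj_bump (r : R) (b P Q : R -> R) (lo hi : R) :
  bump r b lo hi -> hi < r -> incr_map r P -> incr_map r Q ->
  (forall t, P (Q t) = t) -> (forall t, Q (P t) = t) ->
  bump r (fun t => P (b (Q t))) (P lo) (P hi).
Proof.
  intros Hb Hhi HP HQ PQ QP. pose proof (bump_lo Hb) as Hlo.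
  assert (HloI : in_I r lo) by (unfold in_I; lra).
  assert (HhiI : in_I r hi) by (unfold in_I; lra).
  pose proof (incr_into HP lo HloI). pose proof (incr_into HP hi HhiI).
  split.
  - exact (incr_comp r Q (fun u => P (b u)) HQ (incr_comp r b P (bump_incr Hb) HP)).
  - intros t Ht. assert (HQt : in_I r (Q t)) by (apply (incr_into HQ), Ht).
    rewrite <- (PQ t) at 1. apply (incr_le r P); auto.
    apply (incr_into (bump_incr Hb)), HQt. apply (bump_up Hb), HQt.
  - intros t Ht. assert (HQt : in_I r (Q t)) by (apply (incr_into HQ), Ht).
    assert (E : P (b (Q t)) <> t <-> b (Q t) <> Q t).
    { split; intros Hne E; apply Hne.
      - rewrite E. apply PQ.
      - rewrite <- (QP (b (Q t))), E. reflexivity. }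
    rewrite E, (bump_supp Hb (Q t) HQt).
    split; intros [H1 H2]; split.
    + rewrite <- (PQ t). apply (incr_strict HP); auto.
    + rewrite <- (PQ t) at 1. apply (incr_strict HP); auto.
    + apply (incr_reflect r P); auto. rewrite PQ; exact H1.
    + apply (incr_reflect r P); auto. rewrite PQ; exact H2.
  - unfold in_I in *. split; [lra|]. apply (incr_strict HP); auto; lra.
  - unfold in_I in *. lra.
Qed.

Lemma iter_succ_r (f : R -> R) (m : nat) (y : R) : Nat.iter (S m) f y = Nat.iter m f (f y).
Proof. induction m as [|m IH]; simpl; auto. simpl in IH. rewrite IH. reflexivity. Qed.

Lemma iter_cancel (f h : R -> R) (m : nat) : (forall t, f (h t) = t) ->
  forall t, Nat.iter m f (Nat.iter m h t) = t.
Proof.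
  intros H. induction m as [|m IH]; intros t; [reflexivity|].
  change (Nat.iter (S m) f (h (Nat.iter m h t)) = t). rewrite iter_succ_r, H. apply IH.
Qed.

Definition zpow (a ainv : R -> R) (k : Z) : R -> R :=
  if (0 <=? k)%Z then Nat.iter (Z.to_nat k) a else Nat.iter (Z.to_nat (- k)) ainv.

Section Powers.

Variables (a ainv : R -> R).
Hypotheses (Hia : forall t, ainv (a t) = t) (Hai : forall t, a (ainv t) = t).

Lemma zpow_of_nat (m : nat) (t : R) : zpow a ainv (Z.of_nat m) t = Nat.iter m a t.
Proof.
  unfold zpow. replace (0 <=? Z.of_nat m)%Z with true by (symmetry; apply Z.leb_le; lia).
  rewrite Nat2Z.id. reflexivity.
Qed.

Lemma zpow_opp_nat (m : nat) (t : R) : zpow a ainv (- Z.of_nat m) t = Nat.iter m ainv t.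
Proof.
  destruct m as [|m]; [reflexivity|].
  unfold zpow. replace (0 <=? - Z.of_nat (S m))%Z with false by (symmetry; apply Z.leb_gt; lia).
  rewrite Z.opp_involutive, Nat2Z.id. reflexivity.
Qed.

Lemma Z_nat_or_opp (k : Z) : exists m : nat, k = Z.of_nat m \/ k = (- Z.of_nat m)%Z.
Proof.
  exists (Z.to_nat (Z.abs k)). destruct (Z_le_gt_dec 0 k); [left|right]; lia.
Qed.

Lemma zpow_succ_r (k : Z) (t : R) : zpow a ainv (k + 1) t = zpow a ainv k (a t).
Proof.
  destruct (Z_le_gt_dec 0 k) as [Hk|Hk].
  - replace k with (Z.of_nat (Z.to_nat k)) by (apply Z2Nat.id; lia).
    replace (Z.of_nat (Z.to_nat k) + 1)%Z with (Z.of_nat (S (Z.to_nat k))) by lia.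
    rewrite !zpow_of_nat. apply iter_succ_r.
  - set (m := Z.to_nat (- k - 1)).
    replace k with (- Z.of_nat (S m))%Z by (unfold m; lia).
    replace (- Z.of_nat (S m) + 1)%Z with (- Z.of_nat m)%Z by lia.
    rewrite !zpow_opp_nat, iter_succ_r, Hia. reflexivity.
Qed.

Lemma zpow_cancel (k : Z) (t : R) : zpow a ainv k (zpow a ainv (- k) t) = t.
Proof.
  destruct (Z_nat_or_opp k) as (m & [-> | ->]).
  - rewrite zpow_of_nat, zpow_opp_nat. apply iter_cancel, Hai.
  - rewrite Z.opp_involutive, zpow_of_nat, zpow_opp_nat. apply iter_cancel, Hia.
Qed.

Lemma zpow_incr (r : R) (k : Z) : incr_map r a -> incr_map r ainv ->
  incr_map r (zpow a ainv k).
Proof. intros Ha Hi. unfold zpow. destruct (0 <=? k)%Z; apply incr_iter; assumption. Qed.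

Lemma zpow_conj_in_conj_set (b : R -> R) (k : Z) :
  conj_set a b (fun t => zpow a ainv k (b (zpow a ainv (- k) t))).
Proof.
  destruct (Z_nat_or_opp k) as (m & [-> | ->]); exists m.
  - left. intros t. rewrite zpow_of_nat, zpow_opp_nat, iter_cancel; auto.
  - right. intros t. rewrite Z.opp_involutive, zpow_of_nat, zpow_opp_nat, iter_cancel; auto.
Qed.

End Powers.

(* A bijection of [0,r) lying strictly above the identity on (0,r) has
   unbounded orbits in (0,r): forward orbits approach [r], backward orbits
   approach 0.  (At the supremum [l] of a bounded forward orbit we would
   get [a l <= l].) *)
Section Escape.

Variables (r : R) (a ainv : R -> R).
Hypotheses (Ha : incr_map r a) (Hi : incr_map r ainv).
Hypothesis Hai : forall t, a (ainv t) = t.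
Hypothesis a_above : forall t, 0 < t < r -> t < a t.

Lemma orbit_escapes_up (t0 q : R) : 0 < t0 < r -> q < r ->
  exists K, q < Nat.iter K a t0.
Proof.
  intros Ht0 Hq. apply NNPP. intros Hn.
  assert (Hle : forall K, Nat.iter K a t0 <= q).
  { intros K. destruct (Rle_lt_dec (Nat.iter K a t0) q); [assumption|].
    exfalso; apply Hn; eauto. }
  assert (Hpos : forall K, 0 < Nat.iter K a t0 < r)
    by (intros K; apply (incr_pos (incr_iter r a K Ha)), Ht0).
  destruct (completeness (fun y => exists K, y = Nat.iter K a t0)) as (l & Hub & Hlub).
  { exists q. intros y (K & ->). apply Hle. }
  { exists t0. exists 0%nat. reflexivity. }
  assert (Hl : t0 <= l <= q).
  { split; [apply Hub; exists 0%nat; reflexivity|].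
    apply Hlub. intros y (K & ->). apply Hle. }
  assert (HlI : in_I r l) by (unfold in_I; lra).
  assert (HinvI : in_I r (ainv l)) by (apply (incr_into Hi), HlI).
  (* [ainv l] is again an upper bound of the orbit *)
  assert (Hinv : l <= ainv l).
  { apply Hlub. intros y (K & ->).
    destruct (Rle_lt_dec (Nat.iter K a t0) (ainv l)) as [|Hlt]; [assumption|exfalso].
    assert (a (ainv l) < a (Nat.iter K a t0))
      by (apply (incr_strict Ha); auto; specialize (Hpos K); unfold in_I; lra).
    assert (Nat.iter (S K) a t0 <= l) by (apply Hub; eauto).
    rewrite Hai in H. simpl in H0. lra. }
  assert (a l <= a (ainv l)) by (apply (incr_le r a); auto).
  rewrite Hai in H. pose proof (a_above l ltac:(lra)). lra.
Qed.

Lemma orbit_escapes_down (t0 q : R) : 0 < t0 < r -> 0 < q ->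
  exists K, Nat.iter K ainv t0 <= q.
Proof.
  intros Ht0 Hq. apply NNPP. intros Hn.
  assert (Hgt : forall K, q < Nat.iter K ainv t0).
  { intros K. destruct (Rle_lt_dec (Nat.iter K ainv t0) q); [|assumption].
    exfalso; apply Hn; eauto. }
  assert (Hpos : forall K, 0 < Nat.iter K ainv t0 < r)
    by (intros K; apply (incr_pos (incr_iter r ainv K Hi)), Ht0).
  (* [l] = infimum of the orbit, obtained as minus a supremum *)
  destruct (completeness (fun y => exists K, y = - Nat.iter K ainv t0)) as (l' & Hub & Hlub).
  { exists (- q). intros y (K & ->). specialize (Hgt K). lra. }
  { exists (- t0). exists 0%nat. reflexivity. }
  set (l := - l').
  assert (Hlow : forall K, l <= Nat.iter K ainv t0).
  { intros K. assert (- Nat.iter K ainv t0 <= l') by (apply Hub; eauto). unfold l; lra. }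
  assert (Hl : q <= l <= t0).
  { split; [|apply (Hlow 0%nat)].
    assert (l' <= - q) by (apply Hlub; intros y (K & ->); specialize (Hgt K); lra).
    unfold l; lra. }
  assert (HlI : in_I r l) by (unfold in_I; lra).
  (* [a l] is again a lower bound of the orbit *)
  assert (Hal : l' <= - a l).
  { apply Hlub. intros y (K & ->).
    assert (a l <= a (Nat.iter (S K) ainv t0)).
    { apply (incr_le r a); [exact Ha | exact HlI | | apply Hlow].
      specialize (Hpos (S K)); unfold in_I; lra. }
    simpl in H. rewrite Hai in H. lra. }
  pose proof (a_above l ltac:(lra)). unfold l in *. lra.
Qed.

End Escape.

Section Orbit.

Variables (r : R) (a ainv b : R -> R) (alpha0 : R).
Hypotheses (Ha : bump r a 0 r) (Hi : incr_map r ainv).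
Hypotheses (Hia : forall t, ainv (a t) = t) (Hai : forall t, a (ainv t) = t).
Hypotheses (Hb : bump r b alpha0 (a alpha0)) (Halpha0 : 0 < alpha0 < r).

Let alpha (k : Z) : R := zpow a ainv k alpha0.

Lemma orbit_conj_bump (k : Z) :
  bump r (fun t => zpow a ainv k (b (zpow a ainv (- k) t))) (alpha k) (alpha (k + 1)).
Proof.
  unfold alpha. rewrite zpow_succ_r by exact Hia.
  apply conj_bump; auto.
  - apply (incr_pos (bump_incr Ha)), Halpha0.
  - apply zpow_incr; [exact (bump_incr Ha) | exact Hi].
  - apply zpow_incr; [exact (bump_incr Ha) | exact Hi].
  - apply zpow_cancel; assumption.
  - intros t. rewrite <- (Z.opp_involutive k) at 2. apply zpow_cancel; assumption.
Qed.

Lemma orbit_cover (q : R) : 0 < q < r -> exists k, alpha k <= q < alpha (k + 1).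
Proof.
  intros Hq.
  assert (a_above : forall t, 0 < t < r -> t < a t)
    by (intros t Ht; apply (bump_moves r a 0 r t Ha Ht)).
  destruct (orbit_escapes_up r a ainv (bump_incr Ha) Hi Hai a_above alpha0 q Halpha0 ltac:(lra))
    as (K1 & HK1).
  destruct (orbit_escapes_down r a ainv (bump_incr Ha) Hi Hai a_above alpha0 q Halpha0 ltac:(lra))
    as (K0 & HK0).
  rewrite <- (zpow_of_nat a ainv) in HK1. rewrite <- (zpow_opp_nat a ainv) in HK0.
  destruct (sequence_crossing (fun n => alpha (- Z.of_nat K0 + Z.of_nat n)) q (K0 + K1))
    as (m & Hm).
  - rewrite Z.add_0_r. exact HK0.
  - replace (- Z.of_nat K0 + Z.of_nat (K0 + K1))%Z with (Z.of_nat K1) by lia. exact HK1.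
  - exists (- Z.of_nat K0 + Z.of_nat m)%Z.
    replace (- Z.of_nat K0 + Z.of_nat m + 1)%Z with (- Z.of_nat K0 + Z.of_nat (S m))%Z by lia.
    exact Hm.
Qed.

(* Second claim: every point of (0,r) lies in the support of a conjugate of
   [b] or is the common endpoint of two adjacent ones. *)
Lemma conjugates_centralizer_left_cont (g : R -> R) : inV r posR allR g ->
  (forall h, conj_set a b h -> commute g h) ->
  forall q, 0 < q < r -> left_cont g q.
Proof.
  intros HgV Hcom q Hq.
  assert (Hcomk : forall k, commute g (fun t => zpow a ainv k (b (zpow a ainv (- k) t))))
    by (intros k; apply Hcom, zpow_conj_in_conj_set; assumption).
  destruct (orbit_cover q Hq) as (k & Hk).
  destruct (Req_dec (alpha k) q) as [<-|E].
  - pose proof (orbit_conj_bump (k - 1)) as Hprev.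
    replace (k - 1 + 1)%Z with k in Hprev by ring.
    exact (adjacent_bumps_left_cont r g HgV _ _ _ _ _ Hprev (orbit_conj_bump k)
             (Hcomk (k - 1)%Z) (Hcomk k)).
  - apply (bump_centralizer_left_cont r g HgV _ _ _ (orbit_conj_bump k) (Hcomk k)). lra.
Qed.

End Orbit.

(* Reduction: an element of G is in F as soon as it is left-continuous on
   (0,r), since elements of V are right-continuous. *)
Lemma centralizer_in_F (r : R) (Lam A : R -> Prop) (G : (R -> R) -> Prop)
  (P : (R -> R) -> Prop) :
  subgroupV r G ->
  (forall f, (G f /\ inF r posR allR f) <-> inF r Lam A f) ->
  (forall g, inV r posR allR g -> P g -> forall q, 0 < q < r -> left_cont g q) ->
  forall g, (G g /\ P g) <-> (inF r Lam A g /\ P g).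
Proof.
  intros (HGV & _) HF Hlc g. split.
  - intros (Gg & Pg). split; [|exact Pg]. apply HF. split; [exact Gg|].
    pose proof (HGV g Gg) as HgV. split; [exact HgV|].
    destruct HgV as (_ & Hpw).
    destruct (affine_partition_of_pw r g Hpw) as (n & x & lam & c & Hpart).
    apply cont_of_one_sided; [exact (partition_right_cont r g n x lam c Hpart)|].
    apply Hlc; [exact (HGV g Gg) | exact Pg].
  - intros (Fg & Pg). split; [apply HF in Fg; tauto | exact Pg].
Qed.

Theorem lemma4p7 (r : R) (Lam A : R -> Prop) (G : (R -> R) -> Prop)
  (a b : R -> R) (alpha0 : R) :
  admissible r Lam A ->
  subgroupV r G ->
  (forall f, (G f /\ inF r posR allR f) <-> inF r Lam A f) ->
  Fup r Lam A a ->
  supp_eq a (fun t => 0 < t < r) ->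
  0 < alpha0 < r -> A alpha0 ->
  Fup r Lam A b ->
  supp_eq b (fun t => alpha0 < t < a alpha0) ->
  (forall g, (G g /\ commute g a) <-> (inF r Lam A g /\ commute g a)) /\
  (forall g, (G g /\ (forall h, conj_set a b h -> commute g h)) <->
             (inF r Lam A g /\ (forall h, conj_set a b h -> commute g h))).
Proof.
  intros Hadm HG HF Fa Hsa Halpha0 _ Fb Hsb.
  assert (HLam : forall l, Lam l -> 0 < l)
    by (destruct Hadm as (_ & (HLam & _) & _); exact HLam).
  assert (Ha : bump r a 0 r) by (apply (bump_of_Fup r Lam A); auto; lra).
  assert (Hb : bump r b alpha0 (a alpha0)).
  { pose proof (bump_moves r a 0 r alpha0 Ha Halpha0).
    apply (bump_of_Fup r Lam A); auto; lra. }
  pose proof HG as (_ & _ & _ & HGinv).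
  destruct (HGinv a (proj1 (proj2 (HF a) (proj1 Fa)))) as (ainv & _ & Hia & Hai).
  assert (Hi : incr_map r ainv).
  { apply (incr_inverse r a); [exact (bump_incr Ha) | | apply Fa | exact Hia | exact Hai].
    destruct (Req_dec (a 0) 0) as [|E]; [assumption|apply Hsa in E; lra]. }
  split; apply (centralizer_in_F r Lam A G); auto; intros g HgV Hc.
  - exact (bump_centralizer_left_cont r g HgV a 0 r Ha Hc).
  - exact (conjugates_centralizer_left_cont r a ainv b alpha0 Ha Hi Hia Hai Hb Halpha0 g HgV Hc).
Qed.
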